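(* Let $4\le\beta\le n-2$ and let $\gamma_1,\gamma_2,\gamma_3$ be integers with $\gamma_1,\gamma_2,\gamma_3\ge 2$ and $\gamma_1+\gamma_2+\gamma_3=n$. Then $\mathcal T_{(n),(\beta),(\gamma_1,\gamma_2,\gamma_3)}$ has infinitely many $G$-orbits.
   Context: $\mathbb F$ is an infinite field of characteristic $\ne 2$. Equip $\mathbb F^{2n}$ (canonical basis $e_1,\ldots,e_{2n}$) with the symmetric bilinear form $(e_i,e_j)=\delta_{i,2n+1-j}$, and let $G={\rm O}_{2n}(\mathbb F)$ be its isometry group. A subspace $V$ is isotropic if $(V,V)=\{0\}$. For a sequence ${\bf a}=(\alpha_1,\ldots,\alpha_p)$ of positive integers with $\sum\alpha_j\le n$, $M_{\bf a}$ is the set of flags $V_1\subset\cdots\subset V_p$ in $\mathbb F^{2n}$ with $\dim V_j=\alpha_1+\cdots+\alpha_j$ and $V_p$ isotropic. $\mathcal T_{{\bf a},{\bf b},{\bf c}}=M_{\bf a}\times M_{\bf b}\times M_{\bf c}$ with the diagonal $G$-action. *)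

From HB Require Import structures.
From mathcomp Require Import all_boot all_order all_algebra.
Set Implicit Arguments. Unset Strict Implicit. Unset Printing Implicit Defensive.
Import GRing.Theory.
Local Open Scope ring_scope.

(* Vectors of F^{2n} are row vectors 'rV[F]_(2*n); e_i is the i-th unit row
   vector (0-indexed).  The form is (u,v) = u J v^T with J the antidiagonal
   matrix, i.e. (e_i, e_j) = delta_{i, 2n-1-j} (0-indexed) = delta_{i,2n+1-j}
   (1-indexed). *)

Definition Jform (F : fieldType) (n : nat) : 'M[F]_(2 * n) :=
  \matrix_(i, j) ((i + j == (2 * n).-1)%N)%:R.

Definition bform (F : fieldType) (n : nat) (u v : 'rV[F]_(2 * n)) : F :=
  (u *m Jform F n *m v^T) 0 0.

Definition is_isometry (F : fieldType) (n : nat) (g : 'M[F]_(2 * n)) : Prop :=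
  g \in unitmx /\ forall u v, bform (u *m g) (v *m g) = bform u v.

Definition isotropic (F : fieldType) (n : nat) (V : {vspace 'rV[F]_(2 * n)}) : Prop :=
  forall u v, u \in V -> v \in V -> bform u v = 0.

(* M_a : flags V_1 ⊂ ... ⊂ V_p (p = size a), dim V_j = a_1 + ... + a_j,
   V_p isotropic.  A flag is represented by the sequence [:: V_1; ...; V_p]. *)
Definition is_flag (F : fieldType) (n : nat) (a : seq nat)
    (V : seq {vspace 'rV[F]_(2 * n)}) : Prop :=
  [/\ size V = size a,
      (forall j, (j < size a)%N ->
         \dim (nth 0%VS V j) = (\sum_(i < j.+1) nth 0%N a i)%N),
      (forall j, (j.+1 < size a)%N -> (nth 0%VS V j <= nth 0%VS V j.+1)%VS)
    & isotropic (last 0%VS V)].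

Definition flag_act (F : fieldType) (n : nat) (g : 'M[F]_(2 * n))
    (V : seq {vspace 'rV[F]_(2 * n)}) : seq {vspace 'rV[F]_(2 * n)} :=
  map (fun W => (linfun (fun v : 'rV[F]_(2 * n) => v *m g) @: W)%VS) V.

Definition triple (F : fieldType) (n : nat) : Type :=
  (seq {vspace 'rV[F]_(2 * n)} * seq {vspace 'rV[F]_(2 * n)} *
   seq {vspace 'rV[F]_(2 * n)})%type.

Definition in_T (F : fieldType) (n : nat) (a b c : seq nat) (t : triple F n) : Prop :=
  is_flag a t.1.1 /\ is_flag b t.1.2 /\ is_flag c t.2.

Definition same_orbit (F : fieldType) (n : nat) (s t : triple F n) : Prop :=
  exists g, is_isometry g /\
    flag_act g s.1.1 = t.1.1 /\ flag_act g s.1.2 = t.1.2 /\ flag_act g s.2 = t.2.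

Definition finitely_many_orbits (F : fieldType) (n : nat) (a b c : seq nat) : Prop :=
  exists (N : nat) (r : nat -> triple F n),
    (forall i, (i < N)%N -> in_T a b c (r i)) /\
    (forall t, in_T a b c t -> exists i, (i < N)%N /\ same_orbit (r i) t).

(* Take the Lagrangian [L] spanned by e_1, ..., e_n and the complementary
   Lagrangian [C3].  For [x] in [L] and [y] in [C3] with [x + y] in an
   isotropic [B], the value [bform x' y] is a skew form [omega x' x] on the
   projection of [B] to [L].  The smaller members [C1 ⊂ C2] of the third flag
   cut out two planes, and [omega x1 x2 * omega x3 x4 / det (omega xi xj)]
   (the invariant of a pair of planes in a symplectic 4-space) is an isometry
   invariant of the triple.  An explicit family of triples attains the value
   [1 + nu] for every [nu], so an infinite field gives infinitely many orbits. *)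

From HB Require Import structures.
From mathcomp Require Import all_boot all_order all_algebra.
From mathcomp Require Import zify ring.
Set Implicit Arguments. Unset Strict Implicit. Unset Printing Implicit Defensive.
Import GRing.Theory.
Local Open Scope ring_scope.

Section Form.
Variables (F : fieldType) (n : nat).
Local Notation rV := 'rV[F]_(2 * n).
Local Notation bform := (@bform F n).

Lemma bformDl (u u' v : rV) : bform (u + u') v = bform u v + bform u' v.
Proof. by rewrite /bform !mulmxDl mxE. Qed.

Lemma bformZl a (u v : rV) : bform (a *: u) v = a * bform u v.
Proof. by rewrite /bform -!scalemxAl mxE. Qed.

Lemma bformDr (u v v' : rV) : bform u (v + v') = bform u v + bform u v'.
Proof. by rewrite /bform linearD /= mulmxDr mxE. Qed.

Lemma bformZr a (u v : rV) : bform u (a *: v) = a * bform u v.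
Proof. by rewrite /bform linearZ /= -scalemxAr mxE. Qed.

Lemma bformNl (u v : rV) : bform (- u) v = - bform u v.
Proof. by rewrite -scaleN1r bformZl mulN1r. Qed.

Lemma bformNr (u v : rV) : bform u (- v) = - bform u v.
Proof. by rewrite -scaleN1r bformZr mulN1r. Qed.

Lemma bformBl (u u' v : rV) : bform (u - u') v = bform u v - bform u' v.
Proof. by rewrite bformDl bformNl. Qed.

Lemma bformBr (u v v' : rV) : bform u (v - v') = bform u v - bform u v'.
Proof. by rewrite bformDr bformNr. Qed.

Lemma bform0r (u : rV) : bform u 0 = 0.
Proof. by rewrite -(scale0r 0) bformZr mul0r. Qed.

Lemma bformC (u v : rV) : bform u v = bform v u.
Proof.
have Jform_tr : (Jform F n)^T = Jform F n by apply/matrixP => i j; rewrite !mxE addnC.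
rewrite /bform; have -> : v *m Jform F n *m u^T = (u *m Jform F n *m v^T)^T.
  by rewrite !trmx_mul trmxK Jform_tr mulmxA.
by rewrite [RHS]mxE.
Qed.

Definition orth (x : rV) (V : {vspace rV}) := forall v, v \in V -> bform x v = 0.

Lemma span_orth (X : seq rV) x :
  (forall z, z \in X -> bform x z = 0) -> orth x <<X>>.
Proof.
elim: X => [|z X IH] hX v; first by rewrite span_nil memv0 => /eqP ->; rewrite bform0r.
rewrite span_cons => /memv_addP [_ /vlineP [k ->] [w hw ->]].
rewrite bformDr bformZr hX ?mem_head // IH ?mulr0 ?add0r // => u hu.
by apply: hX; rewrite inE hu orbT.
Qed.

Lemma isotropic_span (X : seq rV) :
  (forall x, x \in X -> forall y, y \in X -> bform x y = 0) -> isotropic <<X>>.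
Proof.
move=> hX u v hu hv; rewrite bformC; apply: span_orth hu => x hx.
by rewrite bformC; apply: span_orth hv => y hy; apply: hX.
Qed.

Lemma free_cons_orth (X : seq rV) x y :
  bform x y != 0 -> (forall z, z \in X -> bform z y = 0) -> free X -> free (x :: X).
Proof.
move=> hxy hX freeX; rewrite free_cons freeX andbT; apply: contra hxy => hx.
by rewrite bformC (span_orth _ hx) // => z /hX; rewrite bformC.
Qed.

(* [evec k] is e_(k+1) and [fvec k] is e_(2n-k); for k < n they form a
   hyperbolic basis.  [fvec] is locked so that lemmas about [evec] never
   rewrite an [fvec]. *)
Definition evec (k : nat) : rV := \row_(j < 2 * n) ((j == k :> nat)%:R).
Definition fvec (k : nat) : rV := locked (evec ((2 * n).-1 - k)).

Lemma bform_evec p r : (p < 2 * n)%N -> (r < 2 * n)%N ->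
  bform (evec p) (evec r) = ((p + r == (2 * n).-1)%N)%:R.
Proof.
move=> hp hr; have evec_delta k (hk : (k < 2 * n)%N) : evec k = delta_mx 0 (Ordinal hk).
  by apply/rowP => j; rewrite !mxE /= -val_eqE.
by rewrite (evec_delta _ hp) (evec_delta _ hr) /bform -rowE trmx_delta -colE !mxE.
Qed.

Lemma bform_ee p r : (p < n)%N -> (r < n)%N -> bform (evec p) (evec r) = 0.
Proof.
move=> hp hr; rewrite bform_evec; try lia.
by have -> : (p + r == (2 * n).-1)%N = false by apply/eqP; lia.
Qed.

Lemma bform_ef p r : (p < n)%N -> (r < n)%N -> bform (evec p) (fvec r) = (p == r)%:R.
Proof.
move=> hp hr; rewrite /fvec -!lock bform_evec; try lia.
by congr (_%:R); apply/eqP/eqP; lia.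
Qed.

Lemma bform_fe p r : (p < n)%N -> (r < n)%N -> bform (fvec p) (evec r) = (p == r)%:R.
Proof. by move=> hp hr; rewrite bformC bform_ef // eq_sym. Qed.

Lemma bform_ff p r : (p < n)%N -> (r < n)%N -> bform (fvec p) (fvec r) = 0.
Proof.
move=> hp hr; rewrite /fvec -!lock bform_evec; try lia.
by have -> : ((2 * n).-1 - p + ((2 * n).-1 - r) == (2 * n).-1)%N = false
  by apply/eqP; lia.
Qed.

End Form.

Section Action.
Variables (F : fieldType) (n : nat).
Local Notation rV := 'rV[F]_(2 * n).
Implicit Types (g : 'M[F]_(2 * n)) (U V : {vspace rV}).

Definition act_space g U : {vspace rV} :=
  (linfun (fun v : rV => v *m g) @: U)%VS.

Definition act_triple g (t : triple F n) : triple F n :=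
  (flag_act g t.1.1, flag_act g t.1.2, flag_act g t.2).

Lemma act_spaceP g U (v : rV) :
  reflect (exists2 u, u \in U & v = u *m g) (v \in act_space g U).
Proof.
by apply: (iffP memv_imgP) => -[u hu ->]; exists u; rewrite ?(lfunE (mulmxr g)).
Qed.

Lemma memv_act g U u : u \in U -> u *m g \in act_space g U.
Proof. by move=> hu; apply/act_spaceP; exists u. Qed.

Lemma orth_act g x V : is_isometry g -> orth x V -> orth (x *m g) (act_space g V).
Proof. by case=> _ iso_g hx _ /act_spaceP [v hv ->]; rewrite iso_g hx. Qed.

Lemma nth_flag_act g (Vs : seq {vspace rV}) i :
  nth 0%VS (flag_act g Vs) i = act_space g (nth 0%VS Vs i).
Proof.
rewrite /flag_act; case: (ltnP i (size Vs)) => hi; first by rewrite (nth_map 0%VS).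
by rewrite !nth_default ?size_map // /act_space limg0.
Qed.

Lemma isometry_invmx g : is_isometry g -> is_isometry (invmx g).
Proof.
case=> unit_g iso_g; split; first by rewrite unitmx_inv.
by move=> u v; rewrite -iso_g !mulmxKV.
Qed.

Lemma act_spaceK g : g \in unitmx -> cancel (act_space g) (act_space (invmx g)).
Proof.
move=> unit_g U; rewrite /act_space -limg_comp.
have -> : (linfun (mulmx^~ (invmx g)) \o linfun (mulmx^~ g) = \1 :> 'End(rV))%VF.
  by apply/lfunP => v; rewrite comp_lfunE id_lfunE !(lfunE (mulmxr _)) /= mulmxK.
exact: lim1g.
Qed.

Lemma act_tripleK g : g \in unitmx -> cancel (act_triple g) (act_triple (invmx g)).
Proof.
move=> unit_g [[A B] C]; rewrite /act_triple /flag_act /= -!map_comp.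
by rewrite !(eq_map (act_spaceK unit_g)) !map_id.
Qed.

Definition isometry_invariant (P : triple F n -> Prop) :=
  forall g s, is_isometry g -> P s -> P (act_triple g s).

Lemma same_orbit_invariant (P : triple F n -> Prop) s t :
  isometry_invariant P -> same_orbit s t -> P s <-> P t.
Proof.
move=> invP [g [iso_g [e1 [e2 e3]]]].
have -> : t = act_triple g s by case: t e1 e2 e3 => [[? ?] ?] /= <- <- <-.
split; first exact: invP.
rewrite -{2}(act_tripleK iso_g.1 s); apply: invP; exact: isometry_invmx.
Qed.

End Action.

Lemma uniq_fresh_seq (T : eqType) : (forall s : seq T, exists x, x \notin s) ->
  forall (s0 : seq T) m, exists s, [/\ size s = m, uniq s & all [predC s0] s].
Proof.
move=> T_infinite s0; elim=> [|m [s [size_s uniq_s s_fresh]]]; first by exists [::].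
have [x] := T_infinite (s ++ s0); rewrite mem_cat negb_or => /andP [x_s x_s0].
by exists (x :: s); rewrite /= size_s x_s x_s0 uniq_s s_fresh.
Qed.

Lemma not_finitely_many_orbits (F : fieldType) (n : nat) (a b c : seq nat)
    (P : triple F n -> F -> Prop) (t : F -> triple F n) (bad : seq F) :
  (forall s : seq F, exists x, x \notin s) ->
  (forall lam, isometry_invariant (P^~ lam)) ->
  (forall x, x \notin bad -> in_T a b c (t x)) ->
  (forall x, x \notin bad -> P (t x) x) ->
  (forall x lam, x \notin bad -> P (t x) lam -> lam = x) ->
  ~ finitely_many_orbits F n a b c.
Proof.
move=> F_infinite invP t_in_T Pt Pt_uniq [N [r [_ cover]]].
have [s [size_s uniq_s /allP s_fresh]] := uniq_fresh_seq F_infinite bad N.+1.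
have s_good (k : 'I_N.+1) : nth 0 s k \notin bad by apply: s_fresh; rewrite mem_nth ?size_s.
have orbit_rep (k : 'I_N.+1) : exists i : 'I_N, same_orbit (r i) (t (nth 0 s k)).
  have [i [lt_iN hi]] := cover _ (t_in_T _ (s_good k)).
  by exists (Ordinal lt_iN).
have [f orbit_f] := fin_all_exists orbit_rep.
have /injectivePn [k1 [k2 neq_k12 f_k12]] : ~~ injectiveb f.
  by apply/injectiveP => /leq_card; rewrite !card_ord ltnn.
suff : nth 0 s k1 = nth 0 s k2.
  by move/eqP; rewrite nth_uniq ?size_s // val_eqE (negbTE neq_k12).
apply: (Pt_uniq _ _ (s_good k2)).
apply: (same_orbit_invariant (invP _) (orbit_f k2)).1; rewrite -f_k12.
exact/(same_orbit_invariant (invP _) (orbit_f k1)).2/Pt.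
Qed.

Section CrossRatio.
Variables (F : fieldType) (n : nat).
Local Notation rV := 'rV[F]_(2 * n).

(* Only [x2], [x3], [x4] need a partner [y] in [C3], since [omega u x] =
   [bform u y] is defined for every [u] in [L]; [c] in [L ∩ B^⊥] is there
   because [omega] sees [x2] only modulo [L ∩ B^⊥]. *)
Definition cross_ratio_spaces (L B C1 C2 C3 : {vspace rV}) (lam : F) : Prop :=
  exists x1 x2 x3 x4 y2 y3 y4 c : rV,
  [/\ x1 \in L, x2 \in L, x3 \in L, x4 \in L & c \in L] /\
  [/\ y2 \in C3, y3 \in C3 & y4 \in C3] /\
  [/\ x2 + y2 \in B, x3 + y3 \in B & x4 + y4 \in B] /\
  [/\ orth c B, orth x1 C2, orth (x2 + c) C2, orth x3 C1 & orth x4 C1] /\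
  [/\ bform x1 y2 != 0, bform x3 y4 != 0 &
      lam * (bform x1 y3 * bform x2 y4 - bform x1 y4 * bform x2 y3)
        = bform x1 y2 * bform x3 y4].

Definition cross_ratio (t : triple F n) (lam : F) : Prop :=
  cross_ratio_spaces (nth 0%VS t.1.1 0) (nth 0%VS t.1.2 0)
    (nth 0%VS t.2 0) (nth 0%VS t.2 1) (nth 0%VS t.2 2) lam.

Lemma cross_ratio_spaces_act (g : 'M[F]_(2 * n)) L B C1 C2 C3 lam :
  is_isometry g -> cross_ratio_spaces L B C1 C2 C3 lam ->
  cross_ratio_spaces (act_space g L) (act_space g B)
    (act_space g C1) (act_space g C2) (act_space g C3) lam.
Proof.
move=> iso_g [x1 [x2 [x3 [x4 [y2 [y3 [y4 [c]]]]]]]].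
move=> [[xL1 xL2 xL3 xL4 cL] [[yC2 yC3 yC4] [[xyB2 xyB3 xyB4]
  [[cB x1C2 x2C2 x3C1 x4C1] [nz12 nz34 eq_lam]]]]].
exists (x1 *m g), (x2 *m g), (x3 *m g), (x4 *m g),
  (y2 *m g), (y3 *m g), (y4 *m g), (c *m g).
have iso := iso_g.2; rewrite !iso -!mulmxDl.
by do !split; rewrite ?memv_act //; apply: orth_act.
Qed.

Lemma cross_ratio_invariant lam : isometry_invariant (cross_ratio^~ lam).
Proof.
by move=> g s iso_g; rewrite /cross_ratio /= !nth_flag_act; apply: cross_ratio_spaces_act.
Qed.

End CrossRatio.

Lemma forall_mem_cons (T : eqType) (P : T -> Prop) x X :
  P x -> (forall z, z \in X -> P z) -> forall z, z \in x :: X -> P z.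
Proof. by move=> hx hX z; rewrite in_cons => /predU1P [->|/hX]. Qed.

Lemma forall_mem_nil (T : eqType) (P : T -> Prop) : forall z, z \in [::] -> P z.
Proof. by []. Qed.

Lemma forall_mem_map_iota (T : eqType) (P : T -> Prop) (f : nat -> T) a k :
  (forall j, (a <= j)%N -> (j < a + k)%N -> P (f j)) ->
  forall z, z \in map f (iota a k) -> P z.
Proof. by move=> h z /mapP [j]; rewrite mem_iota => /andP [h1 h2] ->; apply: h. Qed.

Lemma mem_map_iota (T : eqType) (h : nat -> T) a k j :
  (a <= j)%N -> (j < a + k)%N -> h j \in map h (iota a k).
Proof. by move=> h1 h2; apply: map_f; rewrite mem_iota h1 h2. Qed.

Ltac split_mem :=
  rewrite ?cat_cons ?cat0s; repeat match goal with
  | |- forall z, is_true (z \in _ :: _) -> _ => apply: forall_mem_cons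
  | |- forall z, is_true (z \in [::]) -> _ => apply: forall_mem_nil
  | |- forall z, is_true (z \in map _ (iota _ _)) -> _ =>
      apply: forall_mem_map_iota; try move=> ? ? ?
  end.

Ltac nat_eqs :=
  repeat match goal with
  | |- context [@eq_op ?T ?a ?b] =>
      lazymatch type of a with
      | nat => first [ have -> : (a == b) = false by apply/eqP; lia
                     | have -> : (a == b) = true by apply/eqP; lia ]
      end
  end.

Ltac bform_eval :=
  rewrite ?(bformDl, bformBl, bformDr, bformBr, bformZl, bformZr, bformNl, bformNr);
  rewrite ?bform_ff ?bform_ef ?bform_fe ?bform_ee; try lia; nat_eqs; rewrite /=.

Ltac memv_gen := apply: memv_span;
  rewrite ?mem_cat ?in_cons ?eqxx ?orbT //=; try (apply/orP; right);
  try (apply: mem_map_iota; lia).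

Section Basis.
Variables (F : fieldType) (n : nat).
Local Notation rV := 'rV[F]_(2 * n).
Local Notation e := (@evec F n).
Local Notation f := (@fvec F n).

Lemma dim_span_free (X : seq rV) : free X -> \dim <<X>> = size X.
Proof. by move/eqP. Qed.

Lemma free_evec a k : (a + k <= n)%N -> free (map e (iota a k)).
Proof.
elim: k a => [|k IH] a le_akn; first by rewrite /free span_nil dimv0.
change (free (e a :: map e (iota a.+1 k))).
apply: (free_cons_orth (y := f a)); last by apply: IH; lia.
  by rewrite bform_ef ?eqxx ?oner_eq0 //; lia.
by split_mem; bform_eval.
Qed.

Lemma free_fvec a k : (a + k <= n)%N -> free (map f (iota a k)).
Proof.
elim: k a => [|k IH] a le_akn; first by rewrite /free span_nil dimv0.
change (free (f a :: map f (iota a.+1 k))).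
apply: (free_cons_orth (y := e a)); last by apply: IH; lia.
  by rewrite bform_fe ?eqxx ?oner_eq0 //; lia.
by split_mem; bform_eval.
Qed.

End Basis.

Ltac free_cons_dual y :=
  apply: (free_cons_orth (y := y));
  [ by bform_eval; rewrite ?(mulr0, addr0, add0r, subr0, sub0r) ?oppr_eq0 ?oner_eq0
  | by split_mem; bform_eval; ring
  | ].

Section Family.
Variables (F : fieldType) (n beta g1 g2 g3 : nat) (nu : F).
Hypotheses (beta_ge4 : (4 <= beta)%N) (beta_le : (beta <= n - 2)%N)
  (g1_ge2 : (2 <= g1)%N) (g2_ge2 : (2 <= g2)%N) (g3_ge2 : (2 <= g3)%N)
  (sum_g : (g1 + g2 + g3)%N = n).
Local Notation rV := 'rV[F]_(2 * n).
Local Notation e := (@evec F n).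
Local Notation f := (@fvec F n).

(* [famB] pairs [e 0, e 1] with [f 1, - f 0] and [e 2, e 3] with [f 3, - f 2],
   making [omega] below the standard symplectic form on the first four
   coordinates; [famC2] cuts out the plane [<e 0, e 1>] and [famC1] the plane
   of the [p e 0 + q e 1 + p e 2 + nu q e 3], and their invariant is [1 + nu]. *)
Definition famL : {vspace rV} := <<map e (iota 0 n)>>.
Definition famB : {vspace rV} :=
  <<[:: e 0 + f 1; e 1 - f 0; e 2 + f 3; e 3 - f 2] ++ map e (iota 4 (beta - 4))>>.
Definition famC1 : {vspace rV} :=
  <<[:: f 0 - f 2 - f (n - 2); nu *: f 1 - f 3 - nu *: f (n - 1)]
    ++ map f (iota (g3 + g2) (g1 - 2))>>.
Definition famC2 : {vspace rV} :=
  <<[:: f 0 - f (n - 2); f 1 - f (n - 1); f 2; f 3]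
    ++ map f (iota (g3 + 2) (g1 + g2 - 4))>>.
Definition famC3 : {vspace rV} := <<map f (iota 0 n)>>.
Definition fam : triple F n := ([:: famL], [:: famB], [:: famC1; famC2; famC3]).

Lemma famL_flag : is_flag [:: n] [:: famL].
Proof.
split => //.
- case=> // _; rewrite big_ord1 /famL dim_span_free ?size_map ?size_iota //.
  by apply: free_evec; lia.
- by apply: isotropic_span; split_mem; split_mem; bform_eval.
Qed.

Lemma famB_flag : is_flag [:: beta] [:: famB].
Proof.
split => //.
- case=> // _; rewrite big_ord1 /famB dim_span_free; last first.
    free_cons_dual (f 0); free_cons_dual (f 1); free_cons_dual (f 2).
    free_cons_dual (f 3); apply: free_evec; lia.
  by rewrite size_cat size_map size_iota /=; lia.
- by apply: isotropic_span; split_mem; split_mem; bform_eval; ring.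
Qed.

Lemma famC1_free : free ([:: f 0 - f 2 - f (n - 2); nu *: f 1 - f 3 - nu *: f (n - 1)]
    ++ map f (iota (g3 + g2) (g1 - 2))).
Proof. free_cons_dual (e 0); free_cons_dual (e 3); apply: free_fvec; lia. Qed.

Lemma famC2_free : free ([:: f 0 - f (n - 2); f 1 - f (n - 1); f 2; f 3]
    ++ map f (iota (g3 + 2) (g1 + g2 - 4))).
Proof.
free_cons_dual (e 0); free_cons_dual (e 1); free_cons_dual (e 2); free_cons_dual (e 3).
apply: free_fvec; lia.
Qed.

Lemma famC1_sub : (famC1 <= famC2)%VS.
Proof.
apply/span_subvP => z; move: z; split_mem.
- have -> : f 0 - f 2 - f (n - 2) = (f 0 - f (n - 2)) - f 2 by rewrite addrAC.
  by apply: rpredB; memv_gen.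
- have -> : nu *: f 1 - f 3 - nu *: f (n - 1) = nu *: (f 1 - f (n - 1)) - f 3.
    by rewrite scalerBr addrAC.
  by apply: rpredB; [apply: rpredZ|]; memv_gen.
- by memv_gen.
Qed.

Lemma famC2_sub : (famC2 <= famC3)%VS.
Proof. by apply/span_subvP => z; move: z; split_mem; rewrite ?rpredB //; memv_gen. Qed.

Lemma famC_flag : is_flag [:: g1; g2; g3] [:: famC1; famC2; famC3].
Proof.
split => //.
- case=> [_|[_|[_|//]]]; rewrite !big_ord_recr big_ord0 /=.
  + by rewrite dim_span_free ?famC1_free // size_cat size_map size_iota /=; lia.
  + by rewrite dim_span_free ?famC2_free // size_cat size_map size_iota /=; lia.
  + rewrite dim_span_free ?size_map ?size_iota; first lia.
    by apply: free_fvec; lia.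
- by case=> [_|[_|//]]; [exact: famC1_sub | exact: famC2_sub].
- by apply: isotropic_span; split_mem; split_mem; bform_eval.
Qed.

Lemma fam_in_T : in_T [:: n] [:: beta] [:: g1; g2; g3] fam.
Proof. by split; [exact: famL_flag | split; [exact: famB_flag | exact: famC_flag]]. Qed.

Definition omega (u v : rV) : F :=
  bform u (f 1) * bform v (f 0) - bform u (f 0) * bform v (f 1)
  + bform u (f 3) * bform v (f 2) - bform u (f 2) * bform v (f 3).

Lemma omega_planes x1 x2 x3 x4 :
  bform x1 (f 2) = 0 -> bform x1 (f 3) = 0 -> bform x2 (f 2) = 0 -> bform x2 (f 3) = 0 ->
  bform x3 (f 2) = bform x3 (f 0) -> bform x3 (f 3) = nu * bform x3 (f 1) ->
  bform x4 (f 2) = bform x4 (f 0) -> bform x4 (f 3) = nu * bform x4 (f 1) ->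
  (1 + nu) * (omega x1 x3 * omega x2 x4 - omega x1 x4 * omega x2 x3)
    = omega x1 x2 * omega x3 x4.
Proof. by rewrite /omega => -> -> -> -> -> -> -> ->; ring. Qed.

Lemma mem_famL j : (j < n)%N -> e j \in famL.
Proof. by move=> ?; memv_gen. Qed.

Lemma mem_famC3 j : (j < n)%N -> f j \in famC3.
Proof. by move=> ?; memv_gen. Qed.

Lemma bform_famB u b : u \in famL -> b \in famB -> bform u b = omega u b.
Proof.
move=> uL bB; have [_ _ _ isoL] := famL_flag.
have u_e j : (j < n)%N -> bform u (e j) = 0 by move/mem_famL; apply: isoL.
pose w := bform u (f 1) *: f 0 - bform u (f 0) *: f 1
  + bform u (f 3) *: f 2 - bform u (f 2) *: f 3.
have -> : omega u b = bform w b.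
  by rewrite /omega /w !(bformDl, bformNl, bformZl) ![bform (f _) b]bformC.
apply/eqP; rewrite -subr_eq0 -bformBl; apply/eqP; apply: span_orth bB.
by rewrite /w; split_mem; bform_eval; rewrite ?u_e; try lia; ring.
Qed.

Lemma famB_coord_far b k : b \in famB -> (beta <= k < n)%N -> bform b (f k) = 0.
Proof.
move=> bB /andP [le_bk lt_kn]; rewrite bformC; apply: span_orth bB.
by split_mem; bform_eval; ring.
Qed.

Lemma famC3_coord y k : y \in famC3 -> (k < n)%N -> bform y (f k) = 0.
Proof. by case: famC_flag => _ _ _ isoC3 yC3 /mem_famC3; apply: isoC3. Qed.

Lemma bform_graph x y u : x \in famL -> y \in famC3 -> x + y \in famB -> u \in famL ->
  bform u y = omega u x.
Proof.
move=> xL yC3 xyB uL; have [_ _ _ isoL] := famL_flag.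
rewrite -[y](addKr x) bformDr bformNr (isoL _ _ uL xL) oppr0 add0r bform_famB //.
by rewrite /omega !bformDl !(famC3_coord yC3) ?addr0 //; lia.
Qed.

Lemma graph_coord_far x y : y \in famC3 -> x + y \in famB ->
  bform x (f (n - 2)) = 0 /\ bform x (f (n - 1)) = 0.
Proof.
move=> yC3 xyB; have x_coord k : (beta <= k < n)%N -> bform x (f k) = 0.
  move=> /andP [le_bk lt_kn].
  by rewrite -[x](addrK y) bformBl famB_coord_far ?famC3_coord ?subr0 ?le_bk.
by split; apply: x_coord; apply/andP; split; lia.
Qed.

Lemma orth_famB_coord c : c \in famL -> orth c famB ->
  bform c (f 2) = 0 /\ bform c (f 3) = 0.
Proof.
move=> cL cB; have [_ _ _ isoL] := famL_flag.
have c_e j : (j < n)%N -> bform c (e j) = 0 by move/mem_famL; apply: isoL.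
have b2 : e 2 + f 3 \in famB by memv_gen.
have b3 : e 3 - f 2 \in famB by memv_gen.
move: (cB _ b2) (cB _ b3); rewrite bformDr bformBr !c_e ?add0r ?sub0r; try lia.
by move=> -> /eqP; rewrite oppr_eq0 => /eqP ->.
Qed.

Lemma orth_famC2_coord x : orth x famC2 -> bform x (f 2) = 0 /\ bform x (f 3) = 0.
Proof. by move=> xC2; split; apply: xC2; memv_gen. Qed.

Lemma orth_famC1_coord x : orth x famC1 ->
  bform x (f (n - 2)) = 0 -> bform x (f (n - 1)) = 0 ->
  bform x (f 2) = bform x (f 0) /\ bform x (f 3) = nu * bform x (f 1).
Proof.
move=> xC1 x_n2 x_n1.
have v0 : f 0 - f 2 - f (n - 2) \in famC1 by memv_gen.
have v1 : nu *: f 1 - f 3 - nu *: f (n - 1) \in famC1 by memv_gen.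
move: (xC1 _ v0) (xC1 _ v1); rewrite !bformBr !bformZr x_n2 x_n1 mulr0 !subr0.
by move=> /subr0_eq <- /subr0_eq <-.
Qed.

Lemma cross_ratio_fam_uniq lam : cross_ratio fam lam -> lam = 1 + nu.
Proof.
case=> [x1 [x2 [x3 [x4 [y2 [y3 [y4 [c]]]]]]]] /=.
move=> [[xL1 xL2 xL3 xL4 cL] [[yC2 yC3 yC4] [[xyB2 xyB3 xyB4]
  [[cB x1C2 x2cC2 x3C1 x4C1] [nz12 nz34 eq_lam]]]]].
have [c2 c3] := orth_famB_coord cL cB.
have [x12 x13] := orth_famC2_coord x1C2.
have [x22 x23] : bform x2 (f 2) = 0 /\ bform x2 (f 3) = 0.
  by have [] := orth_famC2_coord x2cC2; rewrite !bformDl c2 c3 !addr0.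
have [x3n2 x3n1] := graph_coord_far yC3 xyB3.
have [x4n2 x4n1] := graph_coord_far yC4 xyB4.
have [x32 x33] := orth_famC1_coord x3C1 x3n2 x3n1.
have [x42 x43] := orth_famC1_coord x4C1 x4n2 x4n1.
have planes := omega_planes x12 x13 x22 x23 x32 x33 x42 x43.
rewrite !(bform_graph xL2 yC2 xyB2, bform_graph xL3 yC3 xyB3, bform_graph xL4 yC4 xyB4) //
  in nz12 nz34 eq_lam.
have nz_det : omega x1 x3 * omega x2 x4 - omega x1 x4 * omega x2 x3 != 0.
  by apply: contraNneq (mulf_neq0 nz12 nz34) => det0; rewrite -planes det0 mulr0.
by apply: (mulIf nz_det); rewrite eq_lam planes.
Qed.

Lemma cross_ratio_fam : 1 + nu != 0 -> cross_ratio fam (1 + nu).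
Proof.
move=> nz_nu; rewrite /cross_ratio /=.
exists (e 0 + e (n - 2)), (e 1), (e 0 + e 2), (e 1 + nu *: e 3),
  (- f 0), (f 1 + f 3), (- f 0 - nu *: f 2), (e (n - 1)).
split; first by split; rewrite ?rpredD ?rpredZ // mem_famL //; lia.
split; first by split; rewrite ?rpredB ?rpredN ?rpredD ?rpredZ // mem_famC3 //; lia.
split.
  split; first by memv_gen.
    by rewrite addrACA rpredD //; memv_gen.
  by rewrite addrACA -scalerBr rpredD ?rpredZ //; memv_gen.
split.
  by split; apply: span_orth; split_mem; bform_eval; ring.
split.
- by bform_eval; rewrite subr0 oppr_eq0 oner_eq0.
- suff -> : bform (e 0 + e 2) (- f 0 - nu *: f 2) = - (1 + nu) by rewrite oppr_eq0.
  by bform_eval; ring.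
- by bform_eval; ring.
Qed.

End Family.

Theorem proposition3p13 (F : fieldType)
    (F_infinite : forall s : seq F, exists x : F, x \notin s)
    (F_char : (2%:R : F) != 0)
    (n beta g1 g2 g3 : nat)
    (hb1 : (4 <= beta)%N) (hb2 : (beta <= n - 2)%N)
    (hg1 : (2 <= g1)%N) (hg2 : (2 <= g2)%N) (hg3 : (2 <= g3)%N)
    (hsum : (g1 + g2 + g3)%N = n) :
  ~ finitely_many_orbits F n [:: n] [:: beta] [:: g1; g2; g3].
Proof.
pose t (lam : F) := fam n beta g1 g2 g3 (lam - 1).
have lamE (lam : F) : 1 + (lam - 1) = lam by rewrite addrC subrK.
apply: (@not_finitely_many_orbits F n _ _ _ (@cross_ratio F n) t [:: 0]) => //.
- exact: cross_ratio_invariant.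
- by move=> lam _; apply: fam_in_T.
- move=> lam; rewrite mem_seq1 => nz_lam.
  by have := @cross_ratio_fam F n beta g1 g2 g3 (lam - 1); rewrite lamE; apply.
- move=> lam mu _; rewrite -{2}[lam]lamE; exact: cross_ratio_fam_uniq.
Qed.
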